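(* Let $F$ be a non-abelian free group. For every integer $m\ge 5$ there exist subgroups $H,K\le F$ with $\operatorname{rk}(H)=\operatorname{rk}(K)=m$ and $\operatorname{rk}(H\cap K)\ge m$ but $\operatorname{rk}(H\vee K)>m$. In other words, Guzman's Group-Theoretic Conjecture fails for every $m\ge 5$.
   Context: $H\vee K$ denotes the subgroup generated by $H$ and $K$. Guzman's Group-Theoretic Conjecture for a given $m\ge2$ asserts: if two subgroups $H,K$ of a free group both have rank $m$ and $\operatorname{rk}(H\cap K)\ge m$, then $\operatorname{rk}(H\vee K)\le m$. *)

(* Free group F(X) on a generating set X, realised as the
   set of freely reduced words over the letters X x {+1,-1}.  Subgroups are
   predicates on words; ranks are minimal sizes of finite generating lists
   (so "rank >= m" / "rank > m" also cover infinite rank). *)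
From mathcomp Require Import all_boot.
Set Implicit Arguments. Unset Strict Implicit. Unset Printing Implicit Defensive.

(* a letter (x, false) stands for x, (x, true) for x^-1 *)
Notation word X := (seq (X * bool)%type).

Definition linv {X : eqType} (a : X * bool) : X * bool := (a.1, ~~ a.2).

Fixpoint reduced {X : eqType} (w : word X) : bool :=
  match w with
  | a :: ((b :: _) as t) => (b != linv a) && reduced t
  | _ => true
  end.

Definition fcons {X : eqType} (a : X * bool) (w : word X) : word X :=
  match w with
  | b :: t => if b == linv a then t else a :: w
  | [::] => [:: a]
  end.

Definition fmul {X : eqType} (u v : word X) : word X := foldr fcons v u.
Definition finv {X : eqType} (w : word X) : word X := rev (map linv w).

Definition subgroup {X : eqType} (H : word X -> Prop) : Prop :=
  [/\ (forall w, H w -> reduced w), H [::],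
      (forall u v, H u -> H v -> H (fmul u v)) &
      (forall u, H u -> H (finv u))].

Definition gen {X : eqType} (S : word X -> Prop) : word X -> Prop :=
  fun w => forall H, subgroup H -> (forall u, S u -> H u) -> H w.

Definition meet {X : eqType} (H K : word X -> Prop) : word X -> Prop :=
  fun w => H w /\ K w.

Definition join {X : eqType} (H K : word X -> Prop) : word X -> Prop :=
  gen (fun w => H w \/ K w).

Definition generated_by {X : eqType} (H : word X -> Prop) (s : seq (word X)) : Prop :=
  all reduced s /\ forall w, H w <-> gen (fun u => u \in s) w.

Definition rank_le {X : eqType} (H : word X -> Prop) (n : nat) : Prop :=
  exists s, size s <= n /\ generated_by H s.

Definition has_rank {X : eqType} (H : word X -> Prop) (m : nat) : Prop :=
  rank_le H m /\ forall n, rank_le H n -> m <= n.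

(* Write a_i = x^-i y x^i and take
     H = <a_0, a_1^2, a_1 a_0 a_1^-1, a_2, a_3, a_6, ..., a_m>,
     K = <a_1, a_0^2, a_0 a_1 a_0^-1, a_4, a_5, a_6, ..., a_m>.
   Both are generated by m elements; H /\ K contains the m elements a_0^2, a_1^2,
   a_0 a_1^2 a_0^-1, a_0^-1 a_1^-1 a_0 a_1, a_1^-1 a_0 a_1 a_0, a_6, ..., a_m; and H \/ K
   contains a_0, ..., a_m.  Every rank lower bound comes from a homomorphism onto Q^n:
   F(X) acts on Z x I, x shifting the level and y acting at level p by an involution of
   a set I of sheets, so that the stabiliser of a base point contains the subgroup at
   hand.  Weights on the y-edges, zero on a spanning tree and a basis vector on each
   other edge, extend this to an action on Z x I x Q^n whose vector part is additive
   on that stabiliser.  Each list of elements above is sent onto the standard basis,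
   so no shorter list generates the subgroup. *)

From Pilot Require Import Defs.
From mathcomp Require Import all_boot.
From mathcomp Require Import ssralg ssrint rat zmodp matrix mxalgebra zify.
Set Implicit Arguments. Unset Strict Implicit. Unset Printing Implicit Defensive.
Import GRing.Theory.

(* [fingraph] exports another [finv]. *)
Local Notation finv := Defs.finv.

Section FreeGroup.
Context {X : eqType}.
Implicit Types (u v w : word X) (a b : X * bool) (S : word X -> Prop).

Lemma linvK : involutive (@linv X).
Proof. by case=> c e; rewrite /linv /= negbK. Qed.

Definition noncancelling a b := b != linv a.

Lemma reduced_sorted w : reduced w = sorted noncancelling w.
Proof.
by elim: w => // a [|b t] IH //; rewrite -[LHS]/((b != linv a) && reduced (b :: t)) IH.
Qed.

Lemma reduced_fcons a w : reduced w -> reduced (fcons a w).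
Proof.
rewrite !reduced_sorted; case: w => [|b t] //= red_bt.
by case: ifP => [_|/negbT nc]; [exact: path_sorted red_bt | rewrite /= /noncancelling nc].
Qed.

Lemma reduced_fmul u v : reduced v -> reduced (fmul u v).
Proof. by elim: u => //= a u IH red_v; apply/reduced_fcons/IH. Qed.

Lemma reduced_finv u : reduced u -> reduced (finv u).
Proof.
rewrite !reduced_sorted /finv rev_sorted sorted_map.
by apply: sub_sorted => a b; apply: contra => /eqP->; rewrite linvK.
Qed.

Lemma reduced_subgroup : subgroup (fun w : word X => reduced w).
Proof. by split=> // [u v _|u]; [apply: reduced_fmul | apply: reduced_finv]. Qed.

Lemma gen_in S u : S u -> gen S u.
Proof. by move=> Su H _; apply. Qed.

Lemma gen_min S H : subgroup H -> (forall u, S u -> H u) -> forall w, gen S w -> H w.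
Proof. by move=> sH SH w; apply. Qed.

Lemma gen_fmul S u v : gen S u -> gen S v -> gen S (fmul u v).
Proof.
by move=> Su Sv H sH SH; case: (sH) => _ _ mulH _; apply: mulH; [apply: Su | apply: Sv].
Qed.

Lemma gen_finv S u : gen S u -> gen S (finv u).
Proof. by move=> Su H sH SH; case: (sH) => _ _ _ invH; apply: invH; apply: Su. Qed.

Lemma gen_subgroup S : (forall u, S u -> reduced u) -> subgroup (gen S).
Proof.
move=> redS; split.
- exact: gen_min reduced_subgroup redS.
- by move=> H [].
- exact: gen_fmul.
- exact: gen_finv.
Qed.

End FreeGroup.

(* x^-i y x^i, reading (false, _) as x and (true, _) as y *)
Definition yconj_bool (i : nat) : word bool :=
  nseq i (false, true) ++ (true, false) :: nseq i (false, false).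

Lemma reduced_yconj_bool i : reduced (yconj_bool i).
Proof.
rewrite reduced_sorted /yconj_bool.
have path_x k : path noncancelling (true, false) (nseq k (false, false)).
  by elim: k => // -[|k] IH.
have path_xN k : path noncancelling (false, true)
    (nseq k (false, true) ++ (true, false) :: nseq i (false, false)).
  by elim: k => [|k IH] //=; rewrite path_x.
by case: i path_xN => [|i] path_xN //=; rewrite ?path_x.
Qed.

Section TwoLetters.
Context {X : eqType} (x y : X) (hxy : x != y).

Definition xy_letter (a : bool * bool) : X * bool := (if a.1 then y else x, a.2).
Definition xy_word (w : word bool) : word X := map xy_letter w.

Lemma xy_letter_inj : injective xy_letter.
Proof.
move=> [c e] [d f] [E ->]; congr pair.
by case: c d E => [] [] // E; move: hxy; rewrite E eqxx.
Qed.

Lemma xy_word_fcons a w : xy_word (fcons a w) = fcons (xy_letter a) (xy_word w).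
Proof.
case: w => [|b t] //=.
by rewrite -[linv (xy_letter a)]/(xy_letter (linv a)) (inj_eq xy_letter_inj); case: ifP.
Qed.

Lemma xy_word_fmul u v : xy_word (fmul u v) = fmul (xy_word u) (xy_word v).
Proof. by elim: u => //= a u IH; rewrite xy_word_fcons IH. Qed.

Lemma xy_word_finv u : xy_word (finv u) = finv (xy_word u).
Proof. by rewrite /xy_word /finv map_rev -!map_comp. Qed.

Lemma reduced_xy_word w : reduced (xy_word w) = reduced w.
Proof.
rewrite !reduced_sorted /xy_word sorted_map; case: w => // a t /=.
apply: eq_path => b c /=.
by rewrite /noncancelling -[linv (xy_letter b)]/(xy_letter (linv b)) (inj_eq xy_letter_inj).
Qed.

Definition yconj i := xy_word (yconj_bool i).

Lemma reduced_yconj i : reduced (yconj i).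
Proof. by rewrite reduced_xy_word reduced_yconj_bool. Qed.

End TwoLetters.

Definition unit_row {n} (k : nat) : 'rV[rat]_n := \row_(j < n) (j == k :> nat)%:R%R.

Lemma unit_row_delta n (j : 'I_n) : unit_row j = delta_mx 0%R j :> 'rV[rat]_n.
Proof. by apply/rowP => i; rewrite !mxE eqxx. Qed.

Section SkewAction.
Local Open Scope ring_scope.
Context {X : eqType} (x y : X) {I : Type} {n : nat}
  (g : int -> I -> I) (l : int -> I -> 'rV[rat]_n).
Hypothesis g_involutive : forall p, involutive (g p).
Implicit Types (u v w : word X) (a : X * bool) (o : int * I) (z : 'rV[rat]_n).

Definition state := ((int * I) * 'rV[rat]_n)%type.

Definition act_letter a (s : state) : state :=
  let: ((p, i), z) := s in
  if a.1 == x then (if a.2 then ((p - 1, i), z) else ((p + 1, i), z))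
  else if a.1 == y then
    (if a.2 then ((p, g p i), z - l p (g p i)) else ((p, g p i), z + l p i))
  else s.

Definition act w (s : state) : state := foldr act_letter s w.

Lemma act_letterK a s : act_letter (linv a) (act_letter a s) = s.
Proof.
case: a s => c [] [[p i] z]; rewrite /act_letter /=;
  by do 2?case: ifP => //= _; rewrite ?g_involutive ?subrK ?addrK.
Qed.

Lemma act_fcons a w s : act (fcons a w) s = act_letter a (act w s).
Proof.
case: w => [|b t] //=; case: ifP => // /eqP->.
by have := act_letterK (linv a) (act t s); rewrite linvK.
Qed.

Lemma act_fmul u v s : act (fmul u v) s = act u (act v s).
Proof. by elim: u => //= a u IH; rewrite act_fcons IH. Qed.

Lemma act_cat u v s : act (u ++ v) s = act u (act v s).
Proof. exact: foldr_cat. Qed.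

Lemma act_finvK u s : act (finv u) (act u s) = s.
Proof.
elim: u s => //= a u IH s.
by rewrite /finv /= rev_cons -cats1 act_cat /= act_letterK; apply: IH.
Qed.

Lemma act_letter_translate a o z :
  act_letter a (o, z) = ((act_letter a (o, 0)).1, z + (act_letter a (o, 0)).2).
Proof.
case: a o => c [] [p i]; rewrite /act_letter /=;
  by do 2?case: ifP => //= _; rewrite ?add0r ?addr0 ?addrA.
Qed.

Lemma act_translate w o z : act w (o, z) = ((act w (o, 0)).1, z + (act w (o, 0)).2).
Proof.
elim: w z => [|a w IH] z /=; first by rewrite addr0.
by rewrite IH [in RHS]IH add0r act_letter_translate [in RHS]act_letter_translate addrA.
Qed.

Definition act_pt w o := (act w (o, 0)).1.
Definition cocycle w o := (act w (o, 0)).2.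

Lemma act_ptE w o z : act w (o, z) = (act_pt w o, z + cocycle w o).
Proof. by rewrite act_translate. Qed.

Lemma act_pt_cons a w o : act_pt (a :: w) o = act_pt [:: a] (act_pt w o).
Proof. by rewrite /act_pt /= -/(act w _) act_ptE act_letter_translate. Qed.

Lemma act_pt_fmul u v o : act_pt (fmul u v) o = act_pt u (act_pt v o).
Proof. by rewrite /act_pt act_fmul act_ptE /= act_ptE. Qed.

Lemma cocycle_fmul u v o : cocycle (fmul u v) o = cocycle v o + cocycle u (act_pt v o).
Proof. by rewrite /cocycle act_fmul act_ptE /= act_ptE. Qed.

Lemma act_pt_finv_fix u o : act_pt u o = o ->
  act_pt (finv u) o = o /\ cocycle (finv u) o = - cocycle u o.
Proof.
move=> fix_o; have := act_finvK u (o, 0).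
rewrite [act u _]act_ptE fix_o add0r act_ptE => -[-> /(canRL (addKr _)) ->].
by rewrite addr0.
Qed.

Definition stab_in o0 k (B : 'M[rat]_(k, n)) w :=
  [/\ reduced w, act_pt w o0 = o0 & (cocycle w o0 <= B)%MS].

Lemma stab_in_subgroup o0 k (B : 'M_(k, n)) : subgroup (stab_in o0 B).
Proof.
split=> [w [] // | | u v [red_u fix_u Bu] [red_v fix_v Bv] | u [red_u fix_u Bu]].
- by split; rewrite //= sub0mx.
- split; first exact: reduced_fmul.
    by rewrite act_pt_fmul fix_v fix_u.
  by rewrite cocycle_fmul fix_v addmx_sub.
have [fix_u' coc_u'] := act_pt_finv_fix fix_u.
by split; [exact: reduced_finv | | rewrite coc_u' -scaleN1r scalemx_sub].
Qed.

Lemma gen_stab (S : word X -> Prop) o0 :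
  (forall u, S u -> reduced u) -> (forall u, S u -> act_pt u o0 = o0) ->
  forall w, gen S w -> act_pt w o0 = o0.
Proof.
move=> redS fixS w Sw; suff [] : stab_in o0 (1%:M : 'M_n) w by [].
apply: gen_min Sw => [|u Su]; first exact: stab_in_subgroup.
by split; [apply: redS | apply: fixS | apply: submx1].
Qed.

Lemma rank_ge_cocycle (L : word X -> Prop) o0 :
  (forall w, L w -> act_pt w o0 = o0) ->
  (forall j : 'I_n, exists2 w, L w & cocycle w o0 = unit_row j) ->
  forall k, rank_le L k -> (n <= k)%N.
Proof.
move=> fixL spanL k [s [size_s [red_s genL]]].
pose B := \matrix_(i < size s) cocycle (nth [::] s i) o0.
have L_stab w : L w -> stab_in o0 B w.
  move/genL; apply: gen_min; first exact: stab_in_subgroup.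
  move=> u s_u.
  split; first exact: (allP red_s).
    by apply: fixL; apply/genL; apply: gen_in.
  have idx_u : (index u s < size s)%N by rewrite index_mem.
  by apply: (eq_row_sub (Ordinal idx_u)); rewrite rowK nth_index.
have full_B : (1%:M <= B)%MS.
  apply/row_subP => j; have [w /L_stab[_ _ Bw] cw] := spanL j.
  by rewrite row1 -unit_row_delta -cw.
move/mxrankS: full_B; rewrite mxrank1 => le_n_rkB.
exact: leq_trans le_n_rkB (leq_trans (rank_leq_row B) size_s).
Qed.

Lemma has_rank_cocycle (L : word X -> Prop) s o0 :
  generated_by L s -> size s = n ->
  (forall w, L w -> act_pt w o0 = o0) ->
  (forall j : 'I_n, exists2 w, L w & cocycle w o0 = unit_row j) ->
  has_rank L n.
Proof.
move=> genL size_s fixL spanL.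
by split; [exists s; rewrite size_s | exact: rank_ge_cocycle fixL spanL].
Qed.

End SkewAction.

Section PairAction.
Local Open Scope ring_scope.
Context {X : eqType} (x y : X) {I1 I2 : Type} {n1 n2 n : nat}
  (g1 : int -> I1 -> I1) (l1 : int -> I1 -> 'rV[rat]_n1)
  (g2 : int -> I2 -> I2) (l2 : int -> I2 -> 'rV[rat]_n2)
  (l : int -> I1 * I2 -> 'rV[rat]_n).

Definition pair_perm p (i : I1 * I2) := (g1 p i.1, g2 p i.2).

Lemma pair_perm_involutive p :
  involutive (g1 p) -> involutive (g2 p) -> involutive (pair_perm p).
Proof. by move=> g1K g2K [i1 i2]; rewrite /pair_perm /= g1K g2K. Qed.

Lemma act_pt_pair w p i1 i2 :
  let: (q1, j1) := act_pt x y g1 l1 w (p, i1) in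
  let: (q2, j2) := act_pt x y g2 l2 w (p, i2) in
  q1 = q2 /\ act_pt x y pair_perm l w (p, (i1, i2)) = (q1, (j1, j2)).
Proof.
elim: w => [|a w] //=; rewrite !(act_pt_cons _ _ _ _ a w).
case: (act_pt _ _ g1 _ w _) => q1 j1; case: (act_pt _ _ g2 _ w _) => q2 j2 [<- ->].
by rewrite /act_pt /=; case: a => c [] /=; do 2?case: ifP.
Qed.

Lemma act_pt_pair_fix w p i1 i2 :
  act_pt x y g1 l1 w (p, i1) = (p, i1) -> act_pt x y g2 l2 w (p, i2) = (p, i2) ->
  act_pt x y pair_perm l w (p, (i1, i2)) = (p, (i1, i2)).
Proof. by move=> fix1 fix2; have := act_pt_pair w p i1 i2; rewrite fix1 fix2 => -[_ ->]. Qed.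

End PairAction.

Section ConjugateAction.
Local Open Scope ring_scope.
Context {X : eqType} (x y : X) (hxy : x != y) {I : Type} {n : nat}
  (g : int -> I -> I) (l : int -> I -> 'rV[rat]_n).
Hypothesis g_involutive : forall p, involutive (g p).

Local Notation act := (act x y g l).

Lemma act_xpow k p i z :
  act (xy_word x y (nseq k (false, false))) ((p, i), z) = ((p + k%:Z, i), z).
Proof.
elim: k => [|k IH] /=; first by rewrite addr0.
by rewrite IH /act_letter /= eqxx; congr (_, _, _); lia.
Qed.

Lemma act_xpowN k p i z :
  act (xy_word x y (nseq k (false, true))) ((p, i), z) = ((p - k%:Z, i), z).
Proof.
elim: k => [|k IH] /=; first by rewrite subr0.
by rewrite IH /act_letter /= eqxx; congr (_, _, _); lia.
Qed.

Lemma act_yconj i p j z :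
  act (yconj x y i) ((p, j), z) = ((p, g (p + i%:Z) j), z + l (p + i%:Z) j).
Proof.
rewrite /yconj /yconj_bool /xy_word map_cat act_cat -/(xy_word x y _) /=.
by rewrite act_xpow /act_letter /= eq_sym (negbTE hxy) eqxx act_xpowN addrK.
Qed.

Lemma act_pt_yconj i p j : act_pt x y g l (yconj x y i) (p, j) = (p, g (p + i%:Z) j).
Proof. by rewrite /act_pt act_yconj. Qed.

Lemma cocycle_yconj i p j : cocycle x y g l (yconj x y i) (p, j) = l (p + i%:Z) j.
Proof. by rewrite /cocycle act_yconj add0r. Qed.

Lemma act_yconj_inv i p j z :
  act (finv (yconj x y i)) ((p, j), z) =
  ((p, g (p + i%:Z) j), z - l (p + i%:Z) (g (p + i%:Z) j)).
Proof.
rewrite -{1}[z](subrK (l (p + i%:Z) (g (p + i%:Z) j))) -{1}[j](g_involutive (p + i%:Z)).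
by rewrite -act_yconj act_finvK.
Qed.

Lemma act_pt_yconj_inv i p j :
  act_pt x y g l (finv (yconj x y i)) (p, j) = (p, g (p + i%:Z) j).
Proof. by rewrite /act_pt act_yconj_inv. Qed.

Lemma cocycle_yconj_inv i p j :
  cocycle x y g l (finv (yconj x y i)) (p, j) = - l (p + i%:Z) (g (p + i%:Z) j).
Proof. by rewrite /cocycle act_yconj_inv add0r. Qed.

End ConjugateAction.

(* Keep products and inverses folded, so that [eval_act] can compute generator by generator. *)
Arguments fmul : simpl never.
Arguments Defs.finv : simpl never.
Arguments yconj : simpl never.

Section Counterexample.
Local Open Scope ring_scope.
Context {X : eqType} (x y : X) (hxy : x != y) (m : nat).
Hypothesis hm : (5 <= m)%N.

Local Notation a := (yconj x y).

Definition aa := fmul (a 0) (a 0).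
Definition bb := fmul (a 1) (a 1).
Definition aba := fmul (a 0) (fmul (a 1) (finv (a 0))).
Definition bab := fmul (a 1) (fmul (a 0) (finv (a 1))).
Definition tail_gens := [seq a (6 + j) | j <- iota 0 (m - 5)].
Definition gens_H := [:: a 0; bb; bab; a 2; a 3] ++ tail_gens.
Definition gens_K := [:: a 1; aa; aba; a 4; a 5] ++ tail_gens.
Definition H := gen (fun u => u \in gens_H).
Definition K := gen (fun u => u \in gens_K).

Lemma forall_gens (P : word X -> Prop) u0 u1 u2 u3 u4 :
  P u0 -> P u1 -> P u2 -> P u3 -> P u4 -> (forall j, (j < m - 5)%N -> P (a (6 + j))) ->
  forall u, u \in [:: u0; u1; u2; u3; u4] ++ tail_gens -> P u.
Proof.
move=> P0 P1 P2 P3 P4 Ptail u; rewrite mem_cat !inE.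
case/orP => [/or4P[| | | /orP[]] /eqP-> // | /mapP[j]].
by rewrite mem_iota => /andP[_ lt_j] ->; apply: Ptail.
Qed.

Lemma size_gens u0 u1 u2 u3 u4 : size ([:: u0; u1; u2; u3; u4] ++ tail_gens) = m.
Proof. by rewrite size_cat size_map size_iota subnKC. Qed.

Lemma mem_tail_gens k : (k < m - 5)%N -> a (6 + k) \in tail_gens.
Proof. by move=> lt_k; apply: map_f; rewrite mem_iota. Qed.

Lemma nth_tail_gens k : (k < m - 5)%N -> nth [::] tail_gens k = a (6 + k).
Proof. by move=> lt_k; rewrite (nth_map 0%N) ?size_iota // nth_iota. Qed.

Ltac reduced_word := repeat (apply: reduced_fmul || apply: reduced_finv || apply: reduced_yconj).

Lemma gens_H_reduced : all reduced gens_H.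
Proof. by apply/allP; apply: (@forall_gens (fun u => is_true (reduced u))) => *; reduced_word. Qed.

Lemma gens_K_reduced : all reduced gens_K.
Proof. by apply/allP; apply: (@forall_gens (fun u => is_true (reduced u))) => *; reduced_word. Qed.

Lemma H_subgroup : subgroup H.
Proof. by apply: gen_subgroup => u; apply: (allP gens_H_reduced). Qed.

Lemma K_subgroup : subgroup K.
Proof. by apply: gen_subgroup => u; apply: (allP gens_K_reduced). Qed.

Ltac eval_act perm_inv :=
  rewrite ?(cocycle_fmul _ _ _ perm_inv, act_pt_fmul _ _ _ perm_inv,
            act_pt_yconj hxy, cocycle_yconj hxy,
            act_pt_yconj_inv hxy _ perm_inv, cocycle_yconj_inv hxy _ perm_inv)
    ?add0r /= ?oppr0 ?add0r ?addr0.

(* Two sheets exchanged by a_1, every other a_p being a loop.  The a_1-edge leaving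
   sheet [true] is a spanning tree, and each other edge at a level used by [gens_H] is
   weighted by the coordinate of the generator it closes up (a_1 a_0 a_1^-1 is the
   a_0-loop on sheet [true]). *)
Definition swapH (p : int) (b : bool) := if p is Posz 1 then ~~ b else b.
Definition weightH (p : int) (b : bool) : 'rV[rat]_m :=
  match p, b with
  | Posz 0, false => unit_row 0
  | Posz 1, false => unit_row 1
  | Posz 0, true => unit_row 2
  | Posz 2, _ => unit_row 3
  | Posz 3, _ => unit_row 4
  | Posz 1, true | Posz 4, _ | Posz 5, _ | Negz _, _ => 0
  | Posz k, _ => unit_row k.-1
  end.

Lemma swapH_involutive p : involutive (swapH p).
Proof. by case: p => [[|[|k]]|k] b //=; rewrite negbK. Qed.

Lemma H_fix w : H w -> act_pt x y swapH weightH w (0, false) = (0, false).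
Proof.
apply: (gen_stab swapH_involutive) => [u|]; first exact: (allP gens_H_reduced).
by apply: forall_gens => *; rewrite /bb /bab; eval_act swapH_involutive.
Qed.

Lemma H_cocycle_onto (j : 'I_m) :
  exists2 w, H w & cocycle x y swapH weightH w (0, false) = unit_row j.
Proof.
exists (nth [::] gens_H j); first by apply: gen_in; rewrite mem_nth // size_gens.
case: j => [[|[|[|[|[|k]]]]] lt_k] /=; rewrite /bb /bab; eval_act swapH_involutive => //.
by rewrite nth_tail_gens ?ltn_subRL //; eval_act swapH_involutive.
Qed.

Lemma has_rank_H : has_rank H m.
Proof.
apply: (has_rank_cocycle swapH_involutive _ _ H_fix H_cocycle_onto).
- by split; [exact: gens_H_reduced |].
- exact: size_gens.
Qed.

(* The same with a_0 and a_1 exchanged. *)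
Definition swapK (p : int) (b : bool) := if p is Posz 0 then ~~ b else b.
Definition weightK (p : int) (b : bool) : 'rV[rat]_m :=
  match p, b with
  | Posz 0, false => unit_row 1
  | Posz 1, false => unit_row 0
  | Posz 1, true => unit_row 2
  | Posz 4, _ => unit_row 3
  | Posz 5, _ => unit_row 4
  | Posz 0, true | Posz 2, _ | Posz 3, _ | Negz _, _ => 0
  | Posz k, _ => unit_row k.-1
  end.

Lemma swapK_involutive p : involutive (swapK p).
Proof. by case: p => [[|k]|k] b //=; rewrite negbK. Qed.

Lemma K_fix w : K w -> act_pt x y swapK weightK w (0, false) = (0, false).
Proof.
apply: (gen_stab swapK_involutive) => [u|]; first exact: (allP gens_K_reduced).
by apply: forall_gens => *; rewrite /aa /aba; eval_act swapK_involutive.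
Qed.

Lemma K_cocycle_onto (j : 'I_m) :
  exists2 w, K w & cocycle x y swapK weightK w (0, false) = unit_row j.
Proof.
exists (nth [::] gens_K j); first by apply: gen_in; rewrite mem_nth // size_gens.
case: j => [[|[|[|[|[|k]]]]] lt_k] /=; rewrite /aa /aba; eval_act swapK_involutive => //.
by rewrite nth_tail_gens ?ltn_subRL //; eval_act swapK_involutive.
Qed.

Lemma has_rank_K : has_rank K m.
Proof.
apply: (has_rank_cocycle swapK_involutive _ _ K_fix K_cocycle_onto).
- by split; [exact: gens_K_reduced |].
- exact: size_gens.
Qed.

Definition abba' := fmul (a 0) (fmul bb (finv (a 0))).
Definition a'b'ab := fmul (finv (a 0)) (fmul (finv (a 1)) (fmul (a 0) (a 1))).
Definition b'aba := fmul (finv (a 1)) (fmul (a 0) (fmul (a 1) (a 0))).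
Definition gens_meet := [:: aa; bb; abba'; a'b'ab; b'aba] ++ tail_gens.

(* Identities between words in the a_i are checked by computing in the free group on
   [bool], which [xy_word] embeds into F(X). *)
Ltac by_two_letters :=
  rewrite /abba' /a'b'ab /b'aba /aa /bb /aba /bab /yconj;
  do 4 rewrite -?xy_word_finv -?(xy_word_fmul hxy);
  by apply: (congr1 (xy_word x y)); vm_compute.

Lemma abba'E : abba' = fmul aba aba.
Proof. by_two_letters. Qed.

Lemma a'b'abE_H : a'b'ab = fmul (finv (a 0)) (fmul (finv bb) (fmul bab bb)).
Proof. by_two_letters. Qed.

Lemma a'b'abE_K : a'b'ab = fmul (finv aa) (fmul (finv aba) (fmul aa (a 1))).
Proof. by_two_letters. Qed.

Lemma b'abaE_H : b'aba = fmul (finv bb) (fmul bab (fmul bb (a 0))).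
Proof. by_two_letters. Qed.

Lemma b'abaE_K : b'aba = fmul (finv (a 1)) (fmul aba aa).
Proof. by_two_letters. Qed.

Ltac gen_word :=
  first [ apply: gen_in; by rewrite /= mem_cat !inE eqxx ?orbT
        | apply: gen_fmul; gen_word
        | apply: gen_finv; gen_word ].

Lemma gens_meet_sub u : u \in gens_meet -> meet H K u.
Proof.
apply: forall_gens => [||||| j lt_j]; split; try by gen_word.
- by rewrite abba'E; gen_word.
- by rewrite a'b'abE_H; gen_word.
- by rewrite a'b'abE_K; gen_word.
- by rewrite b'abaE_H; gen_word.
- by rewrite b'abaE_K; gen_word.
- by apply: gen_in; rewrite mem_cat mem_tail_gens ?orbT.
- by apply: gen_in; rewrite mem_cat mem_tail_gens ?orbT.
Qed.

(* The fibre product of the graphs of [K] and [H]: at levels 0 and 1 the four sheets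
   form a square, with three tree edges and five edges closing up the first five
   elements of [gens_meet]. *)
Definition swapM := pair_perm swapK swapH.
Definition weightM (p : int) (b : bool * bool) : 'rV[rat]_m :=
  match p, b with
  | Posz 0, (true, false) => unit_row 0
  | Posz 0, (false, true) => unit_row 3
  | Posz 0, (true, true) => unit_row 4
  | Posz 1, (false, true) => unit_row 1
  | Posz 1, (true, true) => unit_row 2
  | Posz 0, _ | Posz 1, _ | Posz 2, _ | Posz 3, _ | Posz 4, _ | Posz 5, _ | Negz _, _ => 0
  | Posz k, _ => unit_row k.-1
  end.

Lemma swapM_involutive p : involutive (swapM p).
Proof. exact: pair_perm_involutive (swapK_involutive p) (swapH_involutive p). Qed.

Lemma meet_fix w : meet H K w ->
  act_pt x y swapM weightM w (0, (false, false)) = (0, (false, false)).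
Proof. by case=> /H_fix fixH /K_fix fixK; apply: act_pt_pair_fix fixK fixH. Qed.

Lemma meet_cocycle_onto (j : 'I_m) :
  exists2 w, meet H K w & cocycle x y swapM weightM w (0, (false, false)) = unit_row j.
Proof.
exists (nth [::] gens_meet j); first by apply: gens_meet_sub; rewrite mem_nth // size_gens.
case: j => [[|[|[|[|[|k]]]]] lt_k] /=; rewrite /aa /bb /abba' /a'b'ab /b'aba;
  eval_act swapM_involutive => //.
- by rewrite addrC addNKr.
- by rewrite nth_tail_gens ?ltn_subRL //; eval_act swapM_involutive.
Qed.

Lemma meet_rank_ge k : rank_le (meet H K) k -> (m <= k)%N.
Proof. exact: (rank_ge_cocycle swapM_involutive meet_fix meet_cocycle_onto). Qed.

Definition swapJ (p : int) := @id unit.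
Definition weightJ (p : int) (_ : unit) : 'rV[rat]_m.+1 :=
  if p is Posz k then unit_row k else 0.

Lemma swapJ_involutive p : involutive (swapJ p).
Proof. by []. Qed.

Lemma join_fix w : join H K w -> act_pt x y swapJ weightJ w (0, tt) = (0, tt).
Proof.
have [[redH _ _ _] [redK _ _ _]] := (H_subgroup, K_subgroup).
apply: (gen_stab swapJ_involutive) => [u [/redH | /redK] // | u [Hu | Ku]].
- apply: (gen_stab swapJ_involutive) Hu => [v /(allP gens_H_reduced) // |].
  by apply: forall_gens => *; rewrite /bb /bab; eval_act swapJ_involutive.
- apply: (gen_stab swapJ_involutive) Ku => [v /(allP gens_K_reduced) // |].
  by apply: forall_gens => *; rewrite /aa /aba; eval_act swapJ_involutive.
Qed.

Lemma join_cocycle_onto (j : 'I_m.+1) :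
  exists2 w, join H K w & cocycle x y swapJ weightJ w (0, tt) = unit_row j.
Proof.
exists (a j); last by eval_act swapJ_involutive.
apply: gen_in; case: j => [[|[|[|[|[|[|k]]]]]] lt_k] /=;
  try by [left; gen_word | right; gen_word].
by left; apply: gen_in; rewrite mem_cat mem_tail_gens ?orbT // ltn_subRL.
Qed.

Lemma join_rank_ge k : rank_le (join H K) k -> (m < k)%N.
Proof. exact: (rank_ge_cocycle swapJ_involutive join_fix join_cocycle_onto). Qed.

End Counterexample.

Theorem corollary1p2 (X : eqType) (x y : X) (hxy : x != y) (m : nat) (hm : 5 <= m) :
  exists H K : word X -> Prop,
    subgroup H /\ subgroup K /\ has_rank H m /\ has_rank K m /\
    (forall n, rank_le (meet H K) n -> m <= n) /\
    ~ rank_le (join H K) m.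
Proof.
exists (H x y m), (K x y m).
split; first exact: H_subgroup.
split; first exact: K_subgroup.
split; first exact: (has_rank_H hxy hm).
split; first exact: (has_rank_K hxy hm).
split; first exact: (meet_rank_ge hxy hm).
by move/(join_rank_ge hxy); rewrite ltnn.
Qed.
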